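(* Let $C_n=((v_0,\dots,v_{n-1}),c)$ be an edge-colored oriented cycle of order $n$. Suppose there exist $i,j\in[n]$ with $i\neq j$ such that for every $s\in[n]$ at least one of the following holds (which one may depend on $s$): $c(e_{i+s-1})=c(e_{j+s-1})$ and $c(e_{i+s})=c(e_{j+s})$; or $c(e_{i+s-1})=\overline{c(e_{j+s})}$ and $c(e_{i+s})=\overline{c(e_{j+s-1})}$. Then one of the following holds: (1) the map $v_x\mapsto v_{x+j-i}$ ($x\in[n]$) is a color respecting automorphism of $C_n$; or (2) the map $v_x\mapsto v_{x+2}$ ($x\in[n]$) is a color respecting automorphism of $C_n$ and $c(e)_1=0$ for every edge $e$ of $C_n$.
   Context: All indices are taken modulo $n$. Let $v_0,\dots,v_{n-1}$ be distinct vertices, $e_i=\{v_i,v_{i+1}\}$, and $A$ a set of colors. An edge-colored oriented cycle is $C_n=((v_0,\dots,v_{n-1}),c)$ with $c:\{e_0,\dots,e_{n-1}\}\to\mathbb F_3\times A$; $c(e)_1\in\mathbb F_3$ is the orientation and $c(e)_2\in A$ the undirected color, and $\overline{c(e)}:=(-c(e)_1,c(e)_2)$. A bijection $\varphi$ of $\{v_0,\dots,v_{n-1}\}$ is a color respecting automorphism if for every $i$ there is $j$ with $\{\varphi(v_i),\varphi(v_{i+1})\}=\{v_j,v_{j+1}\}$ and the color of $e_i$ satisfies $c(e_i)=c(e_j)$ if $(\varphi(v_i),\varphi(v_{i+1}))=(v_j,v_{j+1})$, and $c(e_i)=\overline{c(e_j)}$ if $(\varphi(v_i),\varphi(v_{i+1}))=(v_{j+1},v_j)$.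 *)

From mathcomp Require Import all_boot all_order all_algebra.
Set Implicit Arguments. Unset Strict Implicit. Unset Printing Implicit Defensive.
Import GRing.Theory.
Local Open Scope ring_scope.

(* An edge-colored oriented cycle of order n (n >= 3): the vertices v_0..v_{n-1}
   are identified with their indices in 'Z_n (indices taken mod n), the edge
   e_i = {v_i, v_{i+1}} is identified with its index i : 'Z_n, and the coloring
   is c : 'Z_n -> 'F_3 * A  (orientation, undirected color). *)

Definition cbar (A : Type) (a : 'F_3 * A) : 'F_3 * A := (- a.1, a.2).

Definition color_respecting_aut (n : nat) (A : Type) (c : 'Z_n -> 'F_3 * A)
  (phi : 'Z_n -> 'Z_n) : Prop :=
  bijective phi /\
  forall i : 'Z_n, exists j : 'Z_n,
    [set phi i; phi (i + 1)] = [set j; j + 1] /\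
    ((phi i, phi (i + 1)) = (j, j + 1) -> c i = c j) /\
    ((phi i, phi (i + 1)) = (j + 1, j) -> c i = cbar (c j)).

From mathcomp Require Import all_boot all_order all_algebra.
From Stdlib Require Import Classical.
From mathcomp Require Import ring.
Set Implicit Arguments. Unset Strict Implicit. Unset Printing Implicit Defensive.
Import GRing.Theory.
Local Open Scope ring_scope.

(* Put d := j - i.  If c is d-periodic, the rotation by d is an automorphism.
   Otherwise c(k + d) <> c(k) for some k; then the hypothesis at k + 1 must
   hold in its second (reflected) form, which propagates the mismatch to
   k + 1, so the reflected form holds at every position.
   Chaining two consecutive reflections shows that c is 2-periodic and that
   c(x + d + 1) = cbar (c x).  If d were even, 2-periodicity would make c
   d-periodic; so d is odd, d + 1 is even, and c(x) = cbar (c x), i.e. every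
   orientation is its own opposite in F_3, hence zero. *)

Lemma cbarK (A : Type) : involutive (@cbar A).
Proof. by case=> o a; rewrite /cbar /= opprK. Qed.

Lemma eq_oppr_eq0 (R : idomainType) (x : R) : 2%:R != 0 :> R -> x = - x -> x = 0.
Proof.
move=> two_neq0 /eqP; rewrite -addr_eq0 -mulr2n -mulr_natr mulf_eq0.
by rewrite (negPf two_neq0) orbF => /eqP.
Qed.

Lemma Zp_even_or_odd (n : nat) (x : 'Z_n) :
  exists m : nat, x = 2 *+ m \/ x + 1 = 2 *+ m.
Proof.
have def_x := odd_double_half (val x); rewrite -(natr_Zp x) -def_x.
case: (odd (val x)) => /=.
  exists (val x)./2.+1; right.
  by rewrite natr1 -doubleS -mul2n mulrnA.
by exists (val x)./2; left; rewrite add0n -mul2n mulrnA.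
Qed.

Section EdgeColoredCycle.

Variables (A : Type) (n : nat) (c : 'Z_n -> 'F_3 * A).

Definition periodic (t : 'Z_n) := forall x, c (x + t) = c x.

Lemma periodic_mulrn (t : 'Z_n) m : periodic t -> periodic (t *+ m).
Proof.
move=> per_t x; elim: m => [|m IHm]; first by rewrite mulr0n addr0.
by rewrite mulrSr addrA per_t.
Qed.

Lemma periodic_rotation_aut (t : 'Z_n) :
  periodic t -> color_respecting_aut c (fun x => x + t).
Proof.
move=> per_t; split; first by exists (fun x => x - t) => x; rewrite ?addrK ?subrK.
move=> k; exists (k + t); split; first by rewrite addrAC.
split=> [_|]; first by rewrite per_t.
rewrite addrAC => /(congr1 fst) /= /eqP.
by rewrite -subr_eq0 opprD addrA subrr add0r oppr_eq0 oner_eq0.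
Qed.

Variable d : 'Z_n.

Definition agree_at (k : 'Z_n) :=
  c (k - 1) = c (k + d - 1) /\ c k = c (k + d).

Definition reflect_at (k : 'Z_n) :=
  c (k - 1) = cbar (c (k + d)) /\ c k = cbar (c (k + d - 1)).

Hypothesis agree_or_reflect : forall k, agree_at k \/ reflect_at k.

Lemma mismatch_succ k : c (k + d) <> c k -> c (k + 1 + d) <> c (k + 1).
Proof.
move=> mis_k; have [[]|[]] := agree_or_reflect (k + 1); rewrite addrK.
  by rewrite addrAC addrK => eq_k; rewrite eq_k in mis_k.
rewrite addrAC addrK => eq_k eq_k1 eq_k1d; apply: mis_k.
by rewrite eq_k eq_k1d eq_k1 cbarK.
Qed.

Lemma mismatch_everywhere k0 : c (k0 + d) <> c k0 -> forall x, c (x + d) <> c x.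
Proof.
move=> mis_k0; suff mis_m m : c (k0 + m%:R + d) <> c (k0 + m%:R).
  by move=> x; have := mis_m (val (x - k0)); rewrite natr_Zp [k0 + _]addrC subrK.
elim: m => [|m IHm]; first by rewrite mulr0n addr0.
by rewrite -natr1 addrA; apply: mismatch_succ.
Qed.

Lemma reflect_everywhere : ~ periodic d -> forall k, reflect_at k.
Proof.
move=> /not_all_ex_not [k0 /mismatch_everywhere mis] k.
by have [[_ /esym /mis]|] := agree_or_reflect k.
Qed.

Hypothesis reflect_all : forall k, reflect_at k.

Lemma reflect_periodic2 : periodic 2.
Proof.
move=> x; have [_ ->] := reflect_all (x + 2).
have [eq_x _] := reflect_all (x + 1); rewrite addrK in eq_x.
by rewrite eq_x; congr (cbar (c _)); ring.
Qed.

Lemma reflect_shift x : c (x + d + 1) = cbar (c x).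
Proof.
have [eq_x _] := reflect_all (x + 1); rewrite addrK in eq_x.
by rewrite eq_x cbarK; congr (c _); ring.
Qed.

End EdgeColoredCycle.

Theorem mainTheorem14 (A : Type) (n : nat) (hn : (3 <= n)%N)
  (c : 'Z_n -> 'F_3 * A) (i j : 'Z_n) (hij : i != j)
  (H : forall s : 'Z_n,
      (c (i + s - 1) = c (j + s - 1) /\ c (i + s) = c (j + s)) \/
      (c (i + s - 1) = cbar (c (j + s)) /\ c (i + s) = cbar (c (j + s - 1)))) :
  color_respecting_aut c (fun x => x + (j - i)) \/
  (color_respecting_aut c (fun x => x + 2) /\ forall e : 'Z_n, (c e).1 = 0).
Proof.
have match_d k : agree_at c (j - i) k \/ reflect_at c (j - i) k.
  by have := H (k - i); rewrite [j + _]addrCA [i + _]addrC subrK.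
have [per_d|aper_d] := classic (periodic c (j - i)).
  by left; apply: periodic_rotation_aut.
have refl := reflect_everywhere match_d aper_d.
have per2 := reflect_periodic2 refl.
right; split; first exact: periodic_rotation_aut.
have [m [d_even|d_odd]] := Zp_even_or_odd (j - i).
  by case: aper_d; rewrite d_even; apply: periodic_mulrn.
move=> e; apply: eq_oppr_eq0 => //.
have := reflect_shift refl e; rewrite -addrA d_odd (periodic_mulrn m per2 e).
by move=> eq_e; rewrite {1}eq_e.
Qed.
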